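(* Let $\Omega=(\lambda x.x\,x)(\lambda x.x\,x)$. Then $\Omega\approx^p_{\emptyset}\mathcal Sk.\Omega$.
   Context: Terms of $\lambda_S$: $t ::= x \mid \lambda x.t \mid t\,t \mid \mathcal{S}k.t \mid \langle t\rangle$ (shift binds $k$; $\langle\cdot\rangle$ reset), up to $\alpha$-conversion. Values $v::=\lambda x.t$. Pure contexts $E ::= \Box \mid v\,E \mid E\,t$; evaluation contexts $F ::= \Box \mid v\,F \mid F\,t \mid \langle F\rangle$. Reduction: $F[(\lambda x.t)v]\to F[t\{v/x\}]$; $F[\langle E[\mathcal Sk.t]\rangle]\to F[\langle t\{\lambda x.\langle E[x]\rangle/k\}\rangle]$ ($x\notin\mathrm{fv}(E)$); $F[\langle v\rangle]\to F[v]$; $\to^*$ reflexive-transitive closure. Program: term $\langle t\rangle$ (ranged over by $p$). Closures: for $R$ a relation on closed terms, $\widetilde R$ is the smallest relation containing $R$, all $(x,x)$, closed under all term constructors, restricted to closed terms; $\widehat R$ is the smallest relation on closed evaluation contexts with $\Box\widehat R\Box$, $v_0F_0\widehat Rv_1F_1$ if $F_0\widehat RF_1,v_0\widetilde Rv_1$; $F_0t_0\widehat RF_1t_1$ if $F_0\widehat RF_1,t_0\widetilde Rt_1$; $\langle F_0\rangle\widehat R\langle F_1\rangle$ if $F_0\widehat RF_1$. Environmental bisimilarity for programs: an environment $\mathcal E$ is a relation on closed values; an environmental relation $\mathcal X$ is a set of environments and triples $(\mathcal E,t_0,t_1)$, $t_0,t_1$ closed, written $t_0\mathcal X_{\mathcal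 E}t_1$. $\mathcal X$ is an environmental bisimulation for programs if (1) if $t_0\mathcal X_{\mathcal E}t_1$ and $t_0,t_1$ are not both programs, then for all pure $E_0\widehat{\mathcal E}E_1$, $\langle E_0[t_0]\rangle\mathcal X_{\mathcal E}\langle E_1[t_1]\rangle$; (2) if $p_0\mathcal X_{\mathcal E}p_1$: (a) $p_0\to p_0'$ (program) implies $p_1\to^*p_1'$ (program) with $p_0'\mathcal X_{\mathcal E}p_1'$; (b) $p_0\to v_0$ implies $p_1\to^*v_1$ and $\{(v_0,v_1)\}\cup\mathcal E\in\mathcal X$; (c) symmetric conditions; (3) for $\mathcal E\in\mathcal X$, $(\lambda x.t_0)\mathcal E(\lambda x.t_1)$ and $v_0\widetilde{\mathcal E}v_1$ imply $t_0\{v_0/x\}\mathcal X_{\mathcal E}t_1\{v_1/x\}$. $\approx^p$ is the largest such relation; $t_0\approx^p_{\emptyset}t_1$ means $(\emptyset,t_0,t_1)\in\approx^p$. *)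

From Stdlib Require Import Arith Relations.

Inductive term : Type :=
| Var : nat -> term
| Lam : term -> term
| App : term -> term -> term
| Shift : term -> term          (* S k. t, k is index 0 in body *)
| Reset : term -> term.

Definition is_value (t : term) : Prop :=
  match t with Lam _ => True | _ => False end.

Definition is_program (t : term) : Prop :=
  match t with Reset _ => True | _ => False end.

Fixpoint closed_at (n : nat) (t : term) : Prop :=
  match t with
  | Var m => m < n
  | Lam b => closed_at (S n) b
  | App a b => closed_at n a /\ closed_at n b
  | Shift b => closed_at (S n) b
  | Reset b => closed_at n b
  end.

Definition closed (t : term) : Prop := closed_at 0 t.

Fixpoint lift (c : nat) (t : term) : term :=
  match t with
  | Var n => if n <? c then Var n else Var (S n)
  | Lam b => Lam (lift (S c) b)
  | App a b => App (lift c a) (lift c b)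
  | Shift b => Shift (lift (S c) b)
  | Reset b => Reset (lift c b)
  end.

Fixpoint liftn (k : nat) (t : term) : term :=
  match k with 0 => t | S k' => lift 0 (liftn k' t) end.

(* subst k u t = t{u/k}, decrementing the indices above k *)
Fixpoint subst (k : nat) (u : term) (t : term) : term :=
  match t with
  | Var n => if n <? k then Var n
             else if n =? k then liftn k u
             else Var (pred n)
  | Lam b => Lam (subst (S k) u b)
  | App a b => App (subst k u a) (subst k u b)
  | Shift b => Shift (subst (S k) u b)
  | Reset b => Reset (subst k u b)
  end.

(* pure contexts E ::= [] | v E | E t   (v = Lam b) *)
Inductive ectx : Type :=
| EHole : ectx
| EArg : term -> ectx -> ectx     (* EArg b E  =  (Lam b) E *)
| EFun : ectx -> term -> ectx.

(* evaluation contexts F ::= [] | v F | F t | <F> *)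
Inductive fctx : Type :=
| FHole : fctx
| FArg : term -> fctx -> fctx     (* FArg b F  =  (Lam b) F *)
| FFun : fctx -> term -> fctx
| FReset : fctx -> fctx.

Fixpoint plugE (E : ectx) (t : term) : term :=
  match E with
  | EHole => t
  | EArg b E' => App (Lam b) (plugE E' t)
  | EFun E' u => App (plugE E' t) u
  end.

Fixpoint plugF (F : fctx) (t : term) : term :=
  match F with
  | FHole => t
  | FArg b F' => App (Lam b) (plugF F' t)
  | FFun F' u => App (plugF F' t) u
  | FReset F' => Reset (plugF F' t)
  end.

Fixpoint liftE (c : nat) (E : ectx) : ectx :=
  match E with
  | EHole => EHole
  | EArg b E' => EArg (lift (S c) b) (liftE c E')
  | EFun E' u => EFun (liftE c E') (lift c u)
  end.

Fixpoint embed (E : ectx) : fctx :=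
  match E with
  | EHole => FHole
  | EArg b E' => FArg b (embed E')
  | EFun E' u => FFun (embed E') u
  end.

Definition cont (E : ectx) : term := Lam (Reset (plugE (liftE 0 E) (Var 0))).

Inductive step : term -> term -> Prop :=
| st_beta : forall F b v, is_value v ->
    step (plugF F (App (Lam b) v)) (plugF F (subst 0 v b))
| st_shift : forall F E t,
    step (plugF F (Reset (plugE E (Shift t))))
         (plugF F (Reset (subst 0 (cont E) t)))
| st_reset : forall F v, is_value v ->
    step (plugF F (Reset v)) (plugF F v).

Definition steps : term -> term -> Prop := clos_refl_trans term step.

Definition rel := term -> term -> Prop.

Inductive tctx (R : rel) : term -> term -> Prop :=
| tc_base : forall a b, R a b -> tctx R a b
| tc_var : forall n, tctx R (Var n) (Var n)
| tc_lam : forall a b, tctx R a b -> tctx R (Lam a) (Lam b)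
| tc_app : forall a a' b b', tctx R a b -> tctx R a' b' ->
    tctx R (App a a') (App b b')
| tc_shift : forall a b, tctx R a b -> tctx R (Shift a) (Shift b)
| tc_reset : forall a b, tctx R a b -> tctx R (Reset a) (Reset b).

Definition tilde (R : rel) (a b : term) : Prop :=
  tctx R a b /\ closed a /\ closed b.

Inductive hat (R : rel) : fctx -> fctx -> Prop :=
| hat_hole : hat R FHole FHole
| hat_arg : forall b0 b1 F0 F1, hat R F0 F1 -> tilde R (Lam b0) (Lam b1) ->
    hat R (FArg b0 F0) (FArg b1 F1)
| hat_fun : forall F0 F1 t0 t1, hat R F0 F1 -> tilde R t0 t1 ->
    hat R (FFun F0 t0) (FFun F1 t1)
| hat_reset : forall F0 F1, hat R F0 F1 -> hat R (FReset F0) (FReset F1).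

(* an environment is a relation on closed values *)
Definition env := rel.

Definition env_ok (E : env) : Prop :=
  forall a b, E a b -> is_value a /\ closed a /\ is_value b /\ closed b.

Definition env_empty : env := fun _ _ => False.

Definition env_add (v0 v1 : term) (E : env) : env :=
  fun a b => (a = v0 /\ b = v1) \/ E a b.

Record envrel : Type := {
  X_env : env -> Prop;
  X_tri : env -> term -> term -> Prop
}.

Definition is_bisim_p (X : envrel) : Prop :=
  (forall E, X_env X E -> env_ok E) /\
  (forall E t0 t1, X_tri X E t0 t1 -> env_ok E /\ closed t0 /\ closed t1) /\
  (* (1) *)
  (forall E t0 t1, X_tri X E t0 t1 -> ~ (is_program t0 /\ is_program t1) ->
     forall E0 E1, hat E (embed E0) (embed E1) ->
       X_tri X E (Reset (plugE E0 t0)) (Reset (plugE E1 t1))) /\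
  (* (2) *)
  (forall E p0 p1, X_tri X E p0 p1 -> is_program p0 -> is_program p1 ->
     (* (a) *)
     (forall p0', step p0 p0' -> is_program p0' ->
        exists p1', steps p1 p1' /\ is_program p1' /\ X_tri X E p0' p1') /\
     (* (b) *)
     (forall v0, step p0 v0 -> is_value v0 ->
        exists v1, steps p1 v1 /\ is_value v1 /\ X_env X (env_add v0 v1 E)) /\
     (* (c) symmetric *)
     (forall p1', step p1 p1' -> is_program p1' ->
        exists p0', steps p0 p0' /\ is_program p0' /\ X_tri X E p0' p1') /\
     (forall v1, step p1 v1 -> is_value v1 ->
        exists v0, steps p0 v0 /\ is_value v0 /\ X_env X (env_add v0 v1 E))) /\
  (* (3) *)
  (forall E, X_env X E ->
     forall b0 b1 v0 v1, E (Lam b0) (Lam b1) ->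
       is_value v0 -> is_value v1 -> tilde E v0 v1 ->
       X_tri X E (subst 0 v0 b0) (subst 0 v1 b1)).

(* environmental bisimilarity for programs: the largest bisimulation,
   i.e. the union of all of them *)
Definition approx_p_env (E : env) : Prop :=
  exists X, is_bisim_p X /\ X_env X E.
Definition approx_p (E : env) (t0 t1 : term) : Prop :=
  exists X, is_bisim_p X /\ X_tri X E t0 t1.

Definition omega_body : term := Lam (App (Var 0) (Var 0)).
Definition Omega : term := App omega_body omega_body.

(* Inside any pure context E, the program <E[Omega]> reduces only to itself,
   and <E[Sk.Omega]> reduces only to <Omega> by capturing E. Hence every
   reduct of such a program is again a closed program and no value is ever
   reached. The relation containing (Omega, Sk.Omega) together with all pairs
   of programs with this property, and no environment at all, is therefore a
   bisimulation: clause (1) plugs both terms into contexts and lands among such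
   pairs, clause (2) is answered by standing still, and clauses (2b) and (3)
   are vacuous. *)
From Stdlib Require Import Relations Lia.

Inductive contract : term -> term -> Prop :=
| contract_beta b v : is_value v -> contract (App (Lam b) v) (subst 0 v b)
| contract_shift E t :
    contract (Reset (plugE E (Shift t))) (Reset (subst 0 (cont E) t))
| contract_reset v : is_value v -> contract (Reset v) v.

(* The terms at which the decomposition into a context stops. *)
Inductive focus : term -> Prop :=
| focus_beta b v : is_value v -> focus (App (Lam b) v)
| focus_reset t : focus (Reset t)
| focus_shift t : focus (Shift t).

Fixpoint fcomp (E : ectx) (F : fctx) : fctx :=
  match E with
  | EHole => F
  | EArg b E' => FArg b (fcomp E' F)
  | EFun E' u => FFun (fcomp E' F) u
  end.

Lemma plugF_embed E t : plugF (embed E) t = plugE E t.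
Proof. induction E; simpl; congruence. Qed.

Lemma plugF_fcomp E F t : plugF (fcomp E F) t = plugE E (plugF F t).
Proof. induction E; simpl; congruence. Qed.

Lemma fcomp_hole E : fcomp E FHole = embed E.
Proof. induction E; simpl; congruence. Qed.

Lemma embed_inj E E' : embed E = embed E' -> E = E'.
Proof.
  revert E'; induction E; intros [|b' E'|E' u'] H; simpl in H;
    try discriminate; try reflexivity; injection H; intros; f_equal; auto.
Qed.

Lemma step_contract p q : step p q ->
  exists F r r', p = plugF F r /\ q = plugF F r' /\ contract r r'.
Proof.
  intros []; do 3 eexists; repeat split; constructor; assumption.
Qed.

Lemma contract_focus r r' : contract r r' -> focus r.
Proof. intros []; constructor; assumption. Qed.

Lemma focus_not_value r : focus r -> ~ is_value r.
Proof. intros []; simpl; auto. Qed.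

Lemma is_value_plugE E t : is_value (plugE E t) -> is_value t.
Proof. destruct E; simpl; tauto. Qed.

Lemma not_value_plugF F t : ~ is_value t -> ~ is_value (plugF F t).
Proof. destruct F; simpl; tauto. Qed.

Lemma plugF_focus_not_value F r : focus r -> ~ is_value (plugF F r).
Proof. intros Hr; apply not_value_plugF, focus_not_value, Hr. Qed.

Lemma plugF_focus_plugE F r E t : focus r -> ~ is_value t ->
  plugF F r = plugE E t -> exists F', F = fcomp E F' /\ t = plugF F' r.
Proof.
  intros Hr Ht; revert F; induction E as [|b E IH|E IH u];
    intros F H; simpl in H.
  - exists F; auto.
  - destruct F as [|b' F|F u|F]; simpl in H; try discriminate.
    + subst r; inversion Hr as [b'' v Hv Hb | |]; subst.
      exfalso; apply Ht, (is_value_plugE E); exact Hv.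
    + injection H; intros HF ->.
      destruct (IH F HF) as (F' & -> & ->); exists F'; auto.
    + injection H; intros _ HF.
      exfalso; apply (plugF_focus_not_value F r Hr); rewrite HF; exact I.
  - destruct F as [|b' F|F u'|F]; simpl in H; try discriminate.
    + subst r; inversion Hr as [b' v Hv Hb | |]; subst.
      exfalso; apply Ht, (is_value_plugE E); rewrite <- Hb; exact I.
    + injection H; intros _ HE.
      exfalso; apply Ht, (is_value_plugE E); rewrite <- HE; exact I.
    + injection H; intros -> HF.
      destruct (IH F HF) as (F' & -> & ->); exists F'; auto.
Qed.

Lemma plugF_focus_Omega F r : focus r -> plugF F r = Omega ->
  F = FHole /\ r = Omega.
Proof.
  intros Hr H; destruct F as [|b F|F u|F]; simpl in H; try discriminate.
  - auto.
  - injection H; intros HF _.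
    exfalso; apply (plugF_focus_not_value F r Hr); rewrite HF; exact I.
  - injection H; intros _ HF.
    exfalso; apply (plugF_focus_not_value F r Hr); rewrite HF; exact I.
Qed.

Lemma plugF_eq_Shift F r s : plugF F r = Shift s -> F = FHole /\ r = Shift s.
Proof. intros H; destruct F; simpl in H; try discriminate; auto. Qed.

Lemma step_Reset_plugE E t q : ~ is_value t -> step (Reset (plugE E t)) q ->
  contract (Reset (plugE E t)) q \/
  exists F r r', t = plugF F r /\ contract r r' /\ q = Reset (plugE E (plugF F r')).
Proof.
  intros Ht Hs; destruct (step_contract _ _ Hs) as (F & r & r' & Hp & -> & Hc).
  destruct F as [|b F|F u|F]; simpl in Hp; try discriminate.
  - subst r; left; exact Hc.
  - injection Hp; intros HF; right.
    destruct (plugF_focus_plugE F r E t (contract_focus r r' Hc) Ht (eq_sym HF))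
      as (F' & -> & ->).
    exists F', r, r'; simpl; rewrite plugF_fcomp; auto.
Qed.

Lemma not_value_Omega : ~ is_value Omega.
Proof. simpl; auto. Qed.

Lemma step_Reset_Omega E q : step (Reset (plugE E Omega)) q ->
  q = Reset (plugE E Omega).
Proof.
  intros Hs; destruct (step_Reset_plugE E Omega q not_value_Omega Hs)
    as [Hc | (F & r & r' & Ht & Hc & ->)].
  - exfalso; inversion Hc as [| E0 t0 Hp | v Hv Hp]; subst.
    + rewrite <- plugF_embed in Hp.
      destruct (plugF_focus_plugE _ _ _ _ (focus_shift t0) not_value_Omega Hp)
        as (F' & _ & HO).
      destruct (plugF_focus_Omega F' (Shift t0) (focus_shift t0) (eq_sym HO))
        as [_ Habs]; discriminate.
    + apply not_value_Omega, (is_value_plugE E); assumption.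
  - destruct (plugF_focus_Omega F r (contract_focus r r' Hc) (eq_sym Ht))
      as [-> ->].
    inversion Hc; subst; reflexivity.
Qed.

Lemma step_Reset_Shift E s q : step (Reset (plugE E (Shift s))) q ->
  q = Reset (subst 0 (cont E) s).
Proof.
  assert (Hs : ~ is_value (Shift s)) by (simpl; auto).
  intros Hq; destruct (step_Reset_plugE E (Shift s) q Hs Hq)
    as [Hc | (F & r & r' & Ht & Hc & ->)].
  - inversion Hc as [| E0 t0 Hp | v Hv Hp]; subst.
    + rewrite <- plugF_embed in Hp.
      destruct (plugF_focus_plugE _ _ _ _ (focus_shift t0) Hs Hp)
        as (F' & HE & HS).
      destruct (plugF_eq_Shift F' (Shift t0) s (eq_sym HS))
        as [-> Ht0]; injection Ht0; intros ->.
      rewrite fcomp_hole in HE; apply embed_inj in HE; subst; reflexivity.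
    + exfalso; apply Hs, (is_value_plugE E); assumption.
  - destruct (plugF_eq_Shift F r s (eq_sym Ht)) as [_ ->].
    inversion Hc.
Qed.

Lemma steps_Reset_Omega E q : steps (Reset (plugE E Omega)) q ->
  q = Reset (plugE E Omega).
Proof.
  intros Hs; apply clos_rt_rt1n in Hs.
  remember (Reset (plugE E Omega)) as p eqn:Hp.
  induction Hs as [| x y z Hxy _ IH]; subst; auto.
  apply step_Reset_Omega in Hxy; subst y; apply IH; reflexivity.
Qed.

Definition silent (p : term) : Prop :=
  forall q, steps p q -> is_program q /\ closed q.

Lemma silent_program p : silent p -> is_program p /\ closed p.
Proof. intros H; apply H, rt_refl. Qed.

Lemma silent_step p p' : silent p -> step p p' -> silent p'.
Proof. intros H Hs q Hq; apply H; eapply rt_trans; [apply rt_step|]; eauto. Qed.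

Lemma silent_step_not_value p v : silent p -> step p v -> ~ is_value v.
Proof.
  intros H Hs Hv; destruct (H v (rt_step _ _ _ _ Hs)) as [Hp _].
  destruct v; simpl in *; auto.
Qed.

Lemma closed_Omega : closed Omega.
Proof. unfold closed; simpl; lia. Qed.

Lemma closed_Shift_Omega : closed (Shift Omega).
Proof. unfold closed; simpl; lia. Qed.

Lemma silent_Reset_Omega E : closed (plugE E Omega) -> silent (Reset (plugE E Omega)).
Proof.
  intros Hc q Hq; rewrite (steps_Reset_Omega E q Hq); split; [exact I | exact Hc].
Qed.

Lemma silent_Reset_Shift_Omega E : closed (plugE E (Shift Omega)) ->
  silent (Reset (plugE E (Shift Omega))).
Proof.
  intros Hc q Hq; apply clos_rt_rt1n in Hq.
  inversion Hq as [| p' q' Hs Hq']; subst.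
  - split; [exact I | exact Hc].
  - apply step_Reset_Shift in Hs; simpl in Hs; subst.
    apply (silent_Reset_Omega EHole closed_Omega), clos_rt1n_rt; assumption.
Qed.

Lemma hat_plugF_closed R F0 F1 t0 t1 : hat R F0 F1 -> closed t0 -> closed t1 ->
  closed (plugF F0 t0) /\ closed (plugF F1 t1).
Proof.
  intros H H0 H1; induction H as [| ? ? ? ? _ IH [_ ?] | ? ? ? ? _ IH [_ ?] | ? ? _ IH];
    unfold closed in *; simpl in *; tauto.
Qed.

Definition omega_rel (E : env) (t0 t1 : term) : Prop :=
  E = env_empty /\ ((t0 = Omega /\ t1 = Shift Omega) \/ (silent t0 /\ silent t1)).

Definition omega_bisim : envrel :=
  {| X_env := fun _ => False; X_tri := omega_rel |}.

Lemma omega_bisim_is_bisim : is_bisim_p omega_bisim.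
Proof.
  unfold is_bisim_p, omega_bisim, omega_rel; simpl.
  split; [tauto |].
  split.
  { intros E t0 t1 [-> [[-> ->] | [S0 S1]]]; split; try (intros a b []).
    - exact (conj closed_Omega closed_Shift_Omega).
    - exact (conj (proj2 (silent_program _ S0)) (proj2 (silent_program _ S1))). }
  split.
  { intros E t0 t1 [-> [[-> ->] | [S0 S1]]] Hnp E0 E1 Hh.
    - destruct (hat_plugF_closed _ _ _ _ _ Hh closed_Omega closed_Shift_Omega)
        as [C0 C1].
      rewrite !plugF_embed in C0, C1.
      split; [reflexivity | right].
      exact (conj (silent_Reset_Omega E0 C0) (silent_Reset_Shift_Omega E1 C1)).
    - exfalso; apply Hnp.
      exact (conj (proj1 (silent_program _ S0)) (proj1 (silent_program _ S1))). }
  split; [| tauto].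
  intros E p0 p1 [-> [[-> _] | [S0 S1]]] Hp0 Hp1; [contradiction |].
  repeat split.
  - intros p0' Hs _; exists p1; split; [apply rt_refl |].
    split; [exact Hp1 | split; [reflexivity | right; eauto using silent_step]].
  - intros v0 Hs Hv; exfalso; exact (silent_step_not_value p0 v0 S0 Hs Hv).
  - intros p1' Hs _; exists p0; split; [apply rt_refl |].
    split; [exact Hp0 | split; [reflexivity | right; eauto using silent_step]].
  - intros v1 Hs Hv; exfalso; exact (silent_step_not_value p1 v1 S1 Hs Hv).
Qed.

Theorem lemma18 : approx_p env_empty Omega (Shift Omega).
Proof.
  exists omega_bisim; split; [exact omega_bisim_is_bisim |].
  simpl; unfold omega_rel; auto.
Qed.
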